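(* The class of $(\circ,\wedge,\mathsf{A})$-algebras that are completely representable by partial functions is closed under (arbitrary) direct products.
   Context: A $(\circ,\wedge,\mathsf{A})$-algebra is a set with two binary operations $\circ,\wedge$ and one unary operation $\mathsf{A}$. An algebra of partial functions of this signature is a set of partial functions, with base $X$ the union of all their domains and ranges, closed under: composition $f\circ g=\{(x,z)\mid \exists y\,(x,y)\in f,(y,z)\in g\}$; intersection; antidomain $\mathsf{A}(f)=\{(x,x)\mid x\in X, x\notin\mathrm{dom}(f)\}$. A representation by partial functions is an isomorphism onto such an algebra. The order is $a\le b\iff a\wedge b=a$. A representation $\theta$ is complete if for every nonempty $S$ with $\bigwedge S$ existing, $\theta(\bigwedge S)=\bigcap\theta[S]$ (equivalently, for every $S$ with $\bigvee S$ existing, $\theta(\bigvee S)=\bigcup\theta[S]$). An algebra is completely representable if it has a complete representation. *)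

Record Alg : Type := MkAlg {
  car : Type;
  comp : car -> car -> car;
  meet : car -> car -> car;
  ad : car -> car
}.

Definition le (A : Alg) (a b : car A) : Prop := meet A a b = a.

Definition is_glb (A : Alg) (S : car A -> Prop) (m : car A) : Prop :=
  (forall s, S s -> le A m s) /\
  (forall l, (forall s, S s -> le A l s) -> le A l m).

(* Binary relations on X; partial functions are the functional ones. *)
Definition rel (X : Type) := X -> X -> Prop.
Definition functional {X : Type} (f : rel X) : Prop :=
  forall x y z, f x y -> f x z -> y = z.
Definition rel_eq {X : Type} (f g : rel X) : Prop :=
  forall x y, f x y <-> g x y.

Definition rcomp {X : Type} (f g : rel X) : rel X :=
  fun x z => exists y, f x y /\ g y z.
Definition rmeet {X : Type} (f g : rel X) : rel X :=
  fun x y => f x y /\ g x y.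
(* antidomain relative to base X *)
Definition rad {X : Type} (f : rel X) : rel X :=
  fun x y => x = y /\ ~ (exists z, f x z).

(* theta : A -> partial functions on X is a representation by partial
   functions: injective homomorphism onto a set of partial functions whose
   base (union of domains and ranges) is X. *)
Definition is_rep (A : Alg) (X : Type) (theta : car A -> rel X) : Prop :=
  (forall a, functional (theta a)) /\
  (forall a b, theta a = theta b -> a = b) /\
  (forall x, exists a y, theta a x y \/ theta a y x) /\
  (forall a b, rel_eq (theta (comp A a b)) (rcomp (theta a) (theta b))) /\
  (forall a b, rel_eq (theta (meet A a b)) (rmeet (theta a) (theta b))) /\
  (forall a, rel_eq (theta (ad A a)) (rad (theta a))).

Definition is_complete (A : Alg) (X : Type) (theta : car A -> rel X) : Prop :=
  forall (S : car A -> Prop), (exists s, S s) ->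
  forall m, is_glb A S m ->
  rel_eq (theta m) (fun x y => forall s, S s -> theta s x y).

Definition completely_representable (A : Alg) : Prop :=
  exists (X : Type) (theta : car A -> rel X),
    is_rep A X theta /\ is_complete A X theta.

Definition prod_alg (I : Type) (F : I -> Alg) : Alg :=
  {| car := forall i, car (F i);
     comp := fun a b i => comp (F i) (a i) (b i);
     meet := fun a b i => meet (F i) (a i) (b i);
     ad := fun a i => ad (F i) (a i) |}.

(* Represent the product on the disjoint union of the bases of complete
   representations of the factors, an element acting on the i-th summand as its
   i-th coordinate does there.  Composition, meet and antidomain are then
   computed summand by summand, and a meet in the product projects to a meet in
   every factor (alter the meet in one coordinate to compare it with a lower
   bound there), so completeness transfers.  Every point of the disjoint union
   lies in the base only if the product is nonempty; an empty product is
   represented over the empty base. *)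

From Stdlib Require Import Classical ClassicalEpsilon FunctionalExtensionality
  PropExtensionality Eqdep.

Lemma rel_eq_trans (X : Type) (f g h : rel X) :
  rel_eq f g -> rel_eq g h -> rel_eq f h.
Proof. intros Hfg Hgh x y. rewrite (Hfg x y). apply Hgh. Qed.

Lemma rel_eq_ext (X : Type) (f g : rel X) : rel_eq f g -> f = g.
Proof.
  intros Hfg. extensionality x. extensionality y.
  apply propositional_extensionality, Hfg.
Qed.

Section DisjointUnion.

Variables (I : Type) (Xs : I -> Type).

Definition disjoint_union (R : forall i, rel (Xs i)) : rel (sigT Xs) :=
  fun p q => exists i x y, p = existT Xs i x /\ q = existT Xs i y /\ R i x y.

Lemma disjoint_unionE (R : forall i, rel (Xs i)) i x q :
  disjoint_union R (existT Xs i x) q <-> exists y, q = existT Xs i y /\ R i x y.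
Proof.
  split.
  - intros (j & x' & y & Ep & Eq & Hxy).
    pose proof (f_equal (@projT1 I Xs) Ep) as Eij; simpl in Eij; subst j.
    apply inj_pair2 in Ep; subst x'. eauto.
  - intros (y & Eq & Hxy). exists i, x, y. auto.
Qed.

Lemma disjoint_union_fiber (R : forall i, rel (Xs i)) i x y :
  disjoint_union R (existT Xs i x) (existT Xs i y) <-> R i x y.
Proof.
  rewrite disjoint_unionE. split.
  - intros (y' & E & Hxy). apply inj_pair2 in E. subst y'. exact Hxy.
  - eauto.
Qed.

Lemma disjoint_union_functional (R : forall i, rel (Xs i)) :
  (forall i, functional (R i)) -> functional (disjoint_union R).
Proof.
  intros Hfun [i x] q r Hq Hr.
  apply disjoint_unionE in Hq as (y & -> & Hy).
  apply disjoint_unionE in Hr as (z & -> & Hz).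
  f_equal. exact (Hfun i x y z Hy Hz).
Qed.

Lemma disjoint_union_rel_eq (R S : forall i, rel (Xs i)) :
  (forall i, rel_eq (R i) (S i)) -> rel_eq (disjoint_union R) (disjoint_union S).
Proof.
  intros HRS [i x] q. rewrite !disjoint_unionE.
  split; intros (y & -> & Hxy); exists y; split; auto; apply HRS; exact Hxy.
Qed.

Lemma disjoint_union_fiber_rel_eq (R S : forall i, rel (Xs i)) i :
  rel_eq (disjoint_union R) (disjoint_union S) -> rel_eq (R i) (S i).
Proof. intros HRS x y. rewrite <- !disjoint_union_fiber. apply HRS. Qed.

Lemma disjoint_union_rcomp (R S : forall i, rel (Xs i)) :
  rel_eq (disjoint_union (fun i => rcomp (R i) (S i)))
         (rcomp (disjoint_union R) (disjoint_union S)).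
Proof.
  intros [i x] q. split.
  - rewrite disjoint_unionE. intros (y & -> & z & Hxz & Hzy).
    exists (existT Xs i z). rewrite !disjoint_union_fiber. auto.
  - intros (r & Hr & Hq).
    apply disjoint_unionE in Hr as (z & -> & Hxz).
    apply disjoint_unionE in Hq as (y & -> & Hzy).
    apply disjoint_union_fiber. exists z. auto.
Qed.

Lemma disjoint_union_rmeet (R S : forall i, rel (Xs i)) :
  rel_eq (disjoint_union (fun i => rmeet (R i) (S i)))
         (rmeet (disjoint_union R) (disjoint_union S)).
Proof.
  intros [i x] q. split.
  - rewrite disjoint_unionE. intros (y & -> & Hr & Hs).
    split; apply disjoint_union_fiber; assumption.
  - intros (Hr & Hs).
    apply disjoint_unionE in Hr as (y & -> & Hxy).
    apply disjoint_union_fiber in Hs.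
    apply disjoint_union_fiber. split; assumption.
Qed.

Lemma disjoint_union_rad (R : forall i, rel (Xs i)) :
  rel_eq (disjoint_union (fun i => rad (R i))) (rad (disjoint_union R)).
Proof.
  intros [i x] q. split.
  - rewrite disjoint_unionE. intros (y & -> & <- & Hnone).
    split; [reflexivity|]. intros (r & Hr).
    apply disjoint_unionE in Hr as (z & _ & Hz). eauto.
  - intros (<- & Hnone). apply disjoint_union_fiber.
    split; [reflexivity|]. intros (z & Hz).
    apply Hnone. exists (existT Xs i z). apply disjoint_union_fiber. exact Hz.
Qed.

Lemma disjoint_union_cap (T : Type) (P : T -> Prop) (R : T -> forall i, rel (Xs i)) :
  (exists t, P t) ->
  rel_eq (disjoint_union (fun i x y => forall t, P t -> R t i x y))
         (fun p q => forall t, P t -> disjoint_union (R t) p q).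
Proof.
  intros [t0 Ht0] [i x] q. split.
  - rewrite disjoint_unionE. intros (y & -> & Hxy) t Ht.
    apply disjoint_union_fiber. auto.
  - intros Hall.
    destruct (proj1 (disjoint_unionE _ _ _ _) (Hall t0 Ht0)) as (y & -> & _).
    apply disjoint_union_fiber. intros t Ht.
    apply disjoint_union_fiber. auto.
Qed.

End DisjointUnion.

Section Product.

Variables (I : Type) (F : I -> Alg).

Definition update (a : forall j, car (F j)) (i : I) (v : car (F i)) :
  forall j, car (F j) :=
  fun j => match excluded_middle_informative (i = j) with
           | left e => eq_rect i (fun k => car (F k)) v j e
           | right _ => a j
           end.

Lemma update_same a i v : update a i v i = v.
Proof.
  unfold update. destruct (excluded_middle_informative (i = i)) as [e|n].
  - rewrite <- eq_rect_eq. reflexivity.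
  - contradiction n. reflexivity.
Qed.

Lemma update_other a i v j : i <> j -> update a i v j = a j.
Proof.
  intros Hij. unfold update.
  destruct (excluded_middle_informative (i = j)); [contradiction|reflexivity].
Qed.

Lemma prod_leP (a b : car (prod_alg I F)) :
  le (prod_alg I F) a b <-> forall i, le (F i) (a i) (b i).
Proof.
  split.
  - intros Hab i. exact (f_equal (fun c => c i) Hab).
  - intros Hab. apply functional_extensionality_dep. exact Hab.
Qed.

Lemma is_glb_prod_proj (S : car (prod_alg I F) -> Prop) m i :
  is_glb (prod_alg I F) S m ->
  is_glb (F i) (fun t => exists s, S s /\ s i = t) (m i).
Proof.
  intros [Hlow Hgreat]. split.
  - intros t (s & Hs & <-). exact (proj1 (prod_leP m s) (Hlow s Hs) i).
  - intros l Hl.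
    assert (Hupd : le (prod_alg I F) (update m i l) m).
    { apply Hgreat. intros s Hs. apply prod_leP. intro j.
      destruct (classic (i = j)) as [Eij|Hij].
      - subst j. rewrite update_same. apply Hl. eauto.
      - rewrite update_other by exact Hij. exact (proj1 (prod_leP m s) (Hlow s Hs) j). }
    rewrite <- (update_same m i l). exact (proj1 (prod_leP _ _) Hupd i).
Qed.

End Product.

Section ProductRepresentation.

Variables (I : Type) (F : I -> Alg) (Xs : I -> Type).
Variable th : forall i, car (F i) -> rel (Xs i).

Definition prod_rep (a : car (prod_alg I F)) : rel (sigT Xs) :=
  disjoint_union I Xs (fun i => th i (a i)).

Lemma prod_rep_is_rep (a0 : car (prod_alg I F)) :
  (forall i, is_rep (F i) (Xs i) (th i)) -> is_rep (prod_alg I F) (sigT Xs) prod_rep.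
Proof.
  intros Hrep. split; [|split; [|split; [|split; [|split]]]].
  - intro a. apply disjoint_union_functional. intro i. apply (Hrep i).
  - intros a b Eab. apply functional_extensionality_dep. intro i.
    destruct (Hrep i) as (_ & Hinj & _). apply Hinj, rel_eq_ext.
    apply (disjoint_union_fiber_rel_eq I Xs (fun i => th i (a i)) (fun i => th i (b i))).
    fold (prod_rep a) (prod_rep b). rewrite Eab. intros p q. reflexivity.
  - intros [i x]. destruct (Hrep i) as (_ & _ & Hbase & _).
    destruct (Hbase x) as (v & y & Hxy).
    exists (update I F a0 i v), (existT Xs i y). unfold prod_rep.
    rewrite !disjoint_union_fiber, update_same. exact Hxy.
  - intros a b. eapply rel_eq_trans; [|apply disjoint_union_rcomp].
    apply disjoint_union_rel_eq. intro i. apply (Hrep i).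
  - intros a b. eapply rel_eq_trans; [|apply disjoint_union_rmeet].
    apply disjoint_union_rel_eq. intro i. apply (Hrep i).
  - intro a. eapply rel_eq_trans; [|apply disjoint_union_rad].
    apply disjoint_union_rel_eq. intro i. apply (Hrep i).
Qed.

Lemma prod_rep_is_complete :
  (forall i, is_complete (F i) (Xs i) (th i)) ->
  is_complete (prod_alg I F) (sigT Xs) prod_rep.
Proof.
  intros Hcomplete S HS m Hm.
  eapply rel_eq_trans; [|exact (disjoint_union_cap I Xs _ S (fun s i => th i (s i)) HS)].
  apply disjoint_union_rel_eq. intro i.
  assert (Hproj : exists t, exists s, S s /\ s i = t)
    by (destruct HS as [s0 Hs0]; eauto).
  eapply rel_eq_trans.
  - exact (Hcomplete i _ Hproj (m i) (is_glb_prod_proj I F S m i Hm)).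
  - intros x y. split.
    + intros Hall s Hs. apply Hall. eauto.
    + intros Hall t (s & Hs & <-). auto.
Qed.

End ProductRepresentation.

Lemma completely_representable_empty (A : Alg) :
  (car A -> False) -> completely_representable A.
Proof.
  intros Hempty. exists Empty_set, (fun _ _ _ => False).
  split; [split; [|split; [|split; [|split; [|split]]]]|].
  7: intros S [s _]; destruct (Hempty s).
  3: intros [].
  all: intro a; destruct (Hempty a).
Qed.

Lemma choose_complete_reps (I : Type) (F : I -> Alg) :
  (forall i, completely_representable (F i)) ->
  exists (Xs : I -> Type) (th : forall i, car (F i) -> rel (Xs i)),
    forall i, is_rep (F i) (Xs i) (th i) /\ is_complete (F i) (Xs i) (th i).
Proof.
  intros Hrep.
  pose (pick := fun i => constructive_indefinite_description _ (Hrep i)).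
  pose (pick_th := fun i => constructive_indefinite_description _ (proj2_sig (pick i))).
  exists (fun i => proj1_sig (pick i)), (fun i => proj1_sig (pick_th i)).
  intro i. exact (proj2_sig (pick_th i)).
Qed.

Theorem mainTheorem7 (I : Type) (F : I -> Alg) :
  (forall i, completely_representable (F i)) ->
  completely_representable (prod_alg I F).
Proof.
  intro Hrep.
  destruct (classic (inhabited (forall i, car (F i)))) as [[a0] | Hempty].
  - destruct (choose_complete_reps I F Hrep) as (Xs & th & Hth).
    exists (sigT Xs), (prod_rep I F Xs th). split.
    + apply (prod_rep_is_rep I F Xs th a0). intro i. apply Hth.
    + apply prod_rep_is_complete. intro i. apply Hth.
  - apply completely_representable_empty. intro a. exact (Hempty (inhabits a)).
Qed.
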